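(* Let $U=f+g$ satisfy assumption (H1), assume that $g$ is Lipschitz, and assume $0<\int_{\mathbb{R}^d}e^{-U(x)}\,dx<\infty$. Let $\pi(x)=e^{-U(x)}/\int e^{-U}$ and, for $\lambda>0$, $\pi^\lambda(x)=e^{-U^\lambda(x)}/\int e^{-U^\lambda}$. Then for all $\lambda>0$, $$\|\pi^\lambda-\pi\|_{TV}\le\lambda\,\|g\|_{\mathrm{Lip}}^2 .$$
   Context: Assumption (H1): $U=f+g$ where $f:\mathbb{R}^d\to\mathbb{R}$ and $g:\mathbb{R}^d\to(-\infty,+\infty]$ are both bounded from below; $f$ is convex, continuously differentiable, and $\nabla f$ is $L_f$-Lipschitz; $g$ is proper, convex and lower semicontinuous. For $\lambda>0$, $g^\lambda(x)=\min_{y\in\mathbb{R}^d}\{g(y)+(2\lambda)^{-1}\|x-y\|^2\}$ and $U^\lambda=f+g^\lambda$. For a Lipschitz function $g$, $\|g\|_{\mathrm{Lip}}=\sup\{|g(x)-g(y)|/\|x-y\|: x\ne y\}$ is its smallest Lipschitz constant. $\|\mu-\nu\|_{TV}=\sup\{|\int h\,d\mu-\int h\,d\nu|: h\text{ Borel},\ \sup|h|\le1\}$, which for densities equals $\int|\mu(x)-\nu(x)|\,dx$. *)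

(* R^d is modelled as row vectors 'rV[R]_d. *)
From HB Require Import structures.
From mathcomp Require Import all_boot all_order all_algebra.
From mathcomp Require Import all_classical all_reals all_analysis.
Set Implicit Arguments.
Unset Strict Implicit.
Unset Printing Implicit Defensive.
Import Order.TTheory GRing.Theory Num.Theory.
Import numFieldNormedType.Exports.
Local Open Scope classical_set_scope.
Local Open Scope ring_scope.

Section Defs.
Variable R : realType.

Definition enorm (d : nat) (x : 'rV[R]_d) : R :=
  Num.sqrt (\sum_(i < d) x ord0 i ^+ 2).

(* Lebesgue integral over R^d of a nonnegative (extended-real valued)
   function, computed as the d-fold iterated integral w.r.t. the
   one-dimensional Lebesgue measure (equal to the integral w.r.t.
   d-dimensional Lebesgue measure for nonnegative Borel functions,
   by Tonelli). *)
Fixpoint lebesgue_int (d : nat) : ('rV[R]_d -> \bar R) -> \bar R :=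
  match d return ('rV[R]_d -> \bar R) -> \bar R with
  | 0 => fun F => F 0
  | n.+1 => fun F =>
      (\int[@lebesgue_measure R]_(t in setT)
         lebesgue_int (fun v : 'rV[R]_n => F (row_mx (const_mx t : 'rV[R]_1) v)))%E
  end.

Definition convex_fun (d : nat) (h : 'rV[R]_d -> R) : Prop :=
  forall (x y : 'rV[R]_d) (t : R), 0 <= t -> t <= 1 ->
    h (t *: x + (1 - t) *: y) <= t * h x + (1 - t) * h y.

Definition bounded_below (d : nat) (h : 'rV[R]_d -> R) : Prop :=
  exists m : R, forall x, m <= h x.

Definition grad (d : nat) (h : 'rV[R]_d -> R) (x : 'rV[R]_d) : 'rV[R]_d :=
  \row_(i < d) ('d h x (delta_mx ord0 i : 'rV[R]_d)).

Definition lipschitz_eucl (d : nat) (h : 'rV[R]_d -> R) : Prop :=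
  exists C : R, forall x y, `|h x - h y| <= C * enorm (x - y).

Definition lip_norm (d : nat) (h : 'rV[R]_d -> R) : R :=
  sup [set r | exists x y : 'rV[R]_d, x != y /\ r = `|h x - h y| / enorm (x - y)].

Definition moreau (d : nat) (g : 'rV[R]_d -> R) (lam : R) (x : 'rV[R]_d) : R :=
  inf [set r | exists y : 'rV[R]_d, r = g y + enorm (x - y) ^+ 2 / (2 * lam)].

Definition Zconst (d : nat) (V : 'rV[R]_d -> R) : \bar R :=
  lebesgue_int (fun x => (expR (- V x))%:E).

Definition gibbs (d : nat) (V : 'rV[R]_d -> R) (x : 'rV[R]_d) : R :=
  expR (- V x) / fine (Zconst V).

Definition tv_dist (d : nat) (p q : 'rV[R]_d -> R) : \bar R :=
  lebesgue_int (fun x => (`|p x - q x|)%:E).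

End Defs.

From HB Require Import structures.
From mathcomp Require Import all_boot all_order all_algebra.
From mathcomp Require Import all_classical all_reals all_analysis.
From mathcomp Require Import ring lra measurable_realfun.
Import Order.TTheory GRing.Theory Num.Theory.
Import numFieldNormedType.Exports.
Local Open Scope classical_set_scope.
Local Open Scope ring_scope.

(* Since [g] is [L]-Lipschitz, its Moreau envelope satisfies
   [g - lam L^2 / 2 <= g^lam <= g], hence
   [e^(-U) <= e^(-U^lam) <= e^(lam L^2 / 2) e^(-U)]. Normalising gives
   [pi^lam >= k pi] with [k = e^(-lam L^2 / 2)], and two probability densities
   with [p >= k q] satisfy [int |p - q| <= 2 (1 - k) <= lam L^2]. *)

Section EuclideanNorm.
Context {R : realType} {m : nat}.
Implicit Types (x y v : 'rV[R]_m).

Lemma sum_sqr_le_sqr_sum k (a : 'I_k -> R) :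
  \sum_(i < k) a i ^+ 2 <= (\sum_(i < k) `|a i|) ^+ 2.
Proof.
elim: k a => [|k IH] a; first by rewrite !big_ord0 expr0n.
rewrite !big_ord_recr /= -real_normK ?num_real // sqrrD.
have := IH (fun i => a (widen_ord (leqnSn k) i)).
have : 0 <= \sum_(i < k) `|a (widen_ord (leqnSn k) i)| by apply: sumr_ge0.
have := normr_ge0 (a ord_max); nra.
Qed.

Lemma enorm_ge0 v : 0 <= enorm v.
Proof. exact: sqrtr_ge0. Qed.

Lemma enorm0 : enorm (0 : 'rV[R]_m) = 0.
Proof. by rewrite /enorm big1 ?sqrtr0 // => j _; rewrite mxE expr0n. Qed.

Lemma enormN v : enorm (- v) = enorm v.
Proof. by congr Num.sqrt; apply: eq_bigr => j _; rewrite mxE sqrrN. Qed.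

Lemma enormB x y : enorm (x - y) = enorm (y - x).
Proof. by rewrite -enormN opprB. Qed.

Lemma enorm_eq0 v : (enorm v == 0) = (v == 0).
Proof.
apply/idP/eqP => [|->]; last by rewrite enorm0.
rewrite sqrtr_eq0 => le0; apply/matrixP => i j; rewrite (ord1 i) mxE.
have sum0 : \sum_(k < m) v ord0 k ^+ 2 = 0.
  by apply/eqP; rewrite eq_le le0 sumr_ge0 // => k _; exact: sqr_ge0.
by apply/eqP; rewrite -sqrf_eq0; apply/eqP/(psumr_eq0P _ sum0) => // k _; exact: sqr_ge0.
Qed.

Lemma enorm_le_sum_norm v : enorm v <= \sum_(j < m) `|v ord0 j|.
Proof.
rewrite -[X in _ <= X]ger0_norm ?sumr_ge0 // -sqrtr_sqr.
exact/ler_wsqrtr/sum_sqr_le_sqr_sum.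
Qed.

Lemma ball_rowP x y e :
  ball x e y <-> 0 < e /\ forall j, `|x ord0 j - y ord0 j| < e.
Proof.
split => [[e0 xy]|[e0 xy]]; first by split => // j; exact: xy ord0 j.
by split => // i j; rewrite (ord1 i); exact: xy.
Qed.

Lemma lipschitz_continuous {h : 'rV[R]_m -> R} {C : R} :
  (forall x y, `|h x - h y| <= C * enorm (x - y)) -> continuous h.
Proof.
move=> hC x P /nbhs_ballP[e /= e0 He].
pose K := `|C| * m%:R + 1.
have K0 : 0 < K by rewrite ltr_wpDl // mulr_ge0.
apply/nbhs_ballP; exists (e / K) => /=; first by rewrite divr_gt0.
move=> z /ball_rowP[_ xz]; apply: He; rewrite /ball /=.
have xz_le : enorm (x - z) <= m%:R * (e / K).
  apply: le_trans (enorm_le_sum_norm _) _.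
  rewrite mulr_natl -[in X in _ <= X](card_ord m) -sumr_const.
  by apply: ler_sum => j _; rewrite !mxE; exact/ltW/xz.
apply: le_lt_trans (hC x z) _; apply: le_lt_trans (ler_wpM2r (enorm_ge0 _) (ler_norm C)) _.
apply: le_lt_trans (ler_wpM2l (normr_ge0 C) xz_le) _.
have eK : e = K * (e / K) by rewrite mulrC divfK // gt_eqF.
by rewrite [X in _ < X]eK (mulrA `|C|) ltr_pM2r ?divr_gt0 // /K ltrDl.
Qed.

Lemma ler_lip_norm {h : 'rV[R]_m -> R} : lipschitz_eucl h ->
  forall x y, `|h x - h y| <= lip_norm h * enorm (x - y).
Proof.
case=> C hC x y; have [->|xy] := eqVneq x y; first by rewrite !subrr normr0 enorm0 mulr0.
have xy0 : 0 < enorm (x - y) by rewrite lt0r enorm_ge0 enorm_eq0 subr_eq0 xy.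
rewrite -ler_pdivrMr //; apply: ub_le_sup; last by exists x, y.
exists C => _ [a [b [ab ->]]].
by rewrite ler_pdivrMr // lt0r enorm_ge0 enorm_eq0 subr_eq0 ab.
Qed.

End EuclideanNorm.

Section RationalBoxes.
Context {R : realType} {m : nat}.

Definition rat_box (i : 'rV[rat]_m * rat) : set 'rV[R]_m :=
  [set y | forall j, `|ratr (i.1 ord0 j) - y ord0 j| < ratr i.2].

Lemma open_bigcup_rat_box (P : set 'rV[R]_m) : open P ->
  P = \bigcup_(i in [set i | rat_box i `<=` P]) rat_box i.
Proof.
move=> oP; apply/seteqP; split => [y Py|y [i /= iP /iP//]].
have /nbhs_ballP[e /= e0 yeP] : nbhs y P by exact: oP.
have [r] : exists r : rat, ratr r \in `]0, e / 2[ by apply: rat_in_itvoo; lra.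
rewrite in_itv /= => /andP[r0 re].
have near_y j : exists q : rat, ratr q \in `]y ord0 j - ratr r, y ord0 j + ratr r[.
  by apply: rat_in_itvoo; lra.
pose q := \row_j xchoose (near_y j).
have qy j : `|ratr (q ord0 j) - y ord0 j| < ratr r.
  by rewrite mxE distrC ltr_distlC; have := xchooseP (near_y j); rewrite in_itv.
exists (q, r) => [z qz|]; last exact: qy.
apply: yeP; apply/ball_rowP; split => // j.
rewrite -(subrK (ratr (q ord0 j)) (y ord0 j)) -addrA.
apply: le_lt_trans (ler_normD _ _) _.
by rewrite distrC; have := qy j; have := qz j; rewrite /=; lra.
Qed.

Lemma measurable_preimage_rat_box d (T : measurableType d) (A : T -> 'rV[R]_m) i :
  (forall j, measurable_fun setT (fun x => A x ord0 j)) ->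
  measurable (A @^-1` rat_box i).
Proof.
move=> mA; rewrite (_ : _ @^-1` _ = \bigcap_(j in [set: 'I_m]) (setT `&`
    (fun x => A x ord0 j) @^-1` `]ratr (i.1 ord0 j) - ratr i.2, ratr (i.1 ord0 j) + ratr i.2[)).
  apply: fin_bigcap_measurable => [|j _]; first exact: finite_finset.
  by apply: mA => //; exact: measurable_itv.
apply/seteqP; split => x /= Ax.
  by move=> j _; split => //=; rewrite in_itv /= -ltr_distlC Ax.
by move=> j; have [_] := Ax j Logic.I; rewrite /= in_itv /= -ltr_distlC.
Qed.

Lemma continuous_measurable_comp d (T : measurableType d)
    (F : 'rV[R]_m -> R) (A : T -> 'rV[R]_m) :
  continuous F -> (forall j, measurable_fun setT (fun x => A x ord0 j)) ->
  measurable_fun setT (F \o A).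
Proof.
move=> cF mA.
apply: (measurability _ (RGenOInfty.measurableE R)) => //.
move=> /= _ [_ [a ->] <-]; rewrite setTI comp_preimage.
have /open_bigcup_rat_box -> : open (F @^-1` `]a, +oo[).
  by apply: open_comp => [y _|]; [exact: cF | exact: rray_open].
rewrite preimage_bigcup bigcup_mkcond.
apply: countable_bigcupT_measurable => [|i]; first exact: countableP.
by case: ifP => _; [exact: measurable_preimage_rat_box | exact: measurable0].
Qed.

End RationalBoxes.

Section IteratedIntegral.
Context {R : realType}.
Local Notation mu := (@lebesgue_measure R).

Lemma lebesgue_int_ge0 n (h : 'rV[R]_n -> \bar R) :
  (forall v, 0 <= h v)%E -> (0 <= lebesgue_int h)%E.
Proof.
elim: n h => [|n IH] h h0 /=; first exact: h0.
by apply: integral_ge0 => t _; apply: IH.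
Qed.

Lemma row_mx_const_mulmx n k (t : R) (w : 'rV[R]_n) (M : 'M[R]_(1 + n, k)) :
  row_mx (const_mx t : 'rV_1) w *m M = const_mx t *m usubmx M + w *m dsubmx M.
Proof. by rewrite -{1}(vsubmxK M) mul_row_col. Qed.

(* Integrals along the affine image [v |-> a + v M] of R^n carry enough
   parameters to make the induction on n go through. *)
Lemma lebesgue_int_affineS n k (G : 'rV[R]_k -> \bar R) a (M : 'M[R]_(1 + n, k)) :
  lebesgue_int (fun v => G (a + v *m M)) =
  (\int[mu]_t lebesgue_int (fun w =>
     G (a + const_mx t *m usubmx M + w *m dsubmx M)%R))%E.
Proof.
apply: eq_integral => t _; congr lebesgue_int; apply/funext => w.
by rewrite row_mx_const_mulmx addrA.
Qed.

Lemma measurable_lebesgue_int_affine m n d (T : measurableType d)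
    (F : 'rV[R]_m -> R) (A : T -> 'rV[R]_m) (M : 'M[R]_(n, m)) :
  continuous F -> (forall y, 0 <= F y) ->
  (forall j, measurable_fun setT (fun x => A x ord0 j)) ->
  measurable_fun setT
    ((fun x => lebesgue_int (fun v => (F (A x + v *m M))%:E)) : T -> \bar R).
Proof.
elim: n d T A M => [|n IH] d T A M cF F0 mA.
  under eq_fun do rewrite /= mul0mx addr0.
  exact/measurable_EFinP/continuous_measurable_comp.
pose A' (p : (T * R)%type) := A p.1 + const_mx p.2 *m usubmx (M : 'M[R]_(1 + n, m)).
have mA' j : measurable_fun setT (fun p => A' p ord0 j).
  under eq_fun do rewrite !mxE big_ord1 !mxE.
  apply: measurable_funD; first exact: measurableT_comp (mA j) measurable_fst.
  by apply: measurable_funM => //; exact: measurable_snd.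
rewrite (_ : (fun x => _) = fubini_F mu (fun p =>
    lebesgue_int (fun w => (F (A' p + w *m dsubmx (M : 'M[R]_(1 + n, m))))%:E))).
  apply: measurable_fun_fubini_tonelli_F; first exact: IH.
  by move=> p; apply: lebesgue_int_ge0 => v; rewrite lee_fin.
by apply/funext => x; rewrite /fubini_F (@lebesgue_int_affineS n m (fun y => (F y)%:E)).
Qed.

Lemma measurable_lebesgue_int_section m n (F : 'rV[R]_m -> R) a
    (U : 'M[R]_(1, m)) (M : 'M[R]_(n, m)) :
  continuous F -> (forall y, 0 <= F y) ->
  measurable_fun setT ((fun t =>
    lebesgue_int (fun w => (F (a + const_mx t *m U + w *m M))%:E)) : R -> \bar R).
Proof.
move=> cF F0.
apply: (@measurable_lebesgue_int_affine m n _ _ F (fun t : R => a + const_mx t *m U)) => // j.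
under eq_fun do rewrite !mxE big_ord1 !mxE.
by apply: measurable_funD => //; apply: measurable_funM.
Qed.

Section AffineIntegrals.
Context {m : nat} {F1 F2 : 'rV[R]_m -> R}.
Hypotheses (cF1 : continuous F1) (cF2 : continuous F2).
Hypotheses (F1_ge0 : forall y, 0 <= F1 y) (F2_ge0 : forall y, 0 <= F2 y).

Let int_ge0 (F : 'rV[R]_m -> R) : (forall y, 0 <= F y) -> forall n a (M : 'M[R]_(n, m)),
  (0 <= lebesgue_int (fun v => (F (a + v *m M))%:E))%E.
Proof. by move=> F0 n a M; apply: lebesgue_int_ge0 => v; rewrite lee_fin. Qed.

Lemma lebesgue_int_affineD n a (M : 'M[R]_(n, m)) :
  lebesgue_int (fun v => (F1 (a + v *m M))%:E + (F2 (a + v *m M))%:E)%E =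
  (lebesgue_int (fun v => (F1 (a + v *m M))%:E) +
   lebesgue_int (fun v => (F2 (a + v *m M))%:E))%E.
Proof.
elim: n a M => // n IH a M.
rewrite (@lebesgue_int_affineS n m (fun y => (F1 y)%:E + (F2 y)%:E)%E)
  (@lebesgue_int_affineS n m (fun y => (F1 y)%:E))
  (@lebesgue_int_affineS n m (fun y => (F2 y)%:E)).
under eq_integral do rewrite IH.
apply: ge0_integralD => //;
  by [move=> t _; exact: int_ge0 | exact: measurable_lebesgue_int_section].
Qed.

Lemma lebesgue_int_affineZl n (k : R) a (M : 'M[R]_(n, m)) : 0 <= k ->
  lebesgue_int (fun v => (k * F1 (a + v *m M))%:E) =
  (k%:E * lebesgue_int (fun v => (F1 (a + v *m M))%:E))%E.
Proof.
move=> k0; elim: n a M => [|n IH] a M; first by rewrite /= EFinM.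
rewrite (@lebesgue_int_affineS n m (fun y => (k * F1 y)%:E))
  (@lebesgue_int_affineS n m (fun y => (F1 y)%:E)).
under eq_integral do rewrite IH.
apply: ge0_integralZl_EFin => //;
  by [move=> t _; exact: int_ge0 | exact: measurable_lebesgue_int_section].
Qed.

Lemma le_lebesgue_int_affine n a (M : 'M[R]_(n, m)) : (forall y, F1 y <= F2 y) ->
  (lebesgue_int (fun v => (F1 (a + v *m M))%:E) <=
   lebesgue_int (fun v => (F2 (a + v *m M))%:E))%E.
Proof.
move=> F12; elim: n a M => [|n IH] a M; first by rewrite /= lee_fin.
rewrite (@lebesgue_int_affineS n m (fun y => (F1 y)%:E))
  (@lebesgue_int_affineS n m (fun y => (F2 y)%:E)).
apply: ge0_le_integral => //;
  by [move=> t _; exact: int_ge0 | exact: measurable_lebesgue_int_section].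
Qed.

Let lebesgue_int_idE (h : 'rV[R]_m -> \bar R) :
  lebesgue_int h = lebesgue_int (fun v => h (0 + v *m 1%:M)).
Proof. by congr lebesgue_int; apply/funext => v; rewrite mulmx1 add0r. Qed.

Lemma lebesgue_intD :
  lebesgue_int (fun v => (F1 v + F2 v)%:E) =
  (lebesgue_int (fun v => (F1 v)%:E) + lebesgue_int (fun v => (F2 v)%:E))%E.
Proof.
rewrite (lebesgue_int_idE (fun v => (F1 v)%:E)) (lebesgue_int_idE (fun v => (F2 v)%:E)).
rewrite -lebesgue_int_affineD lebesgue_int_idE.
by congr lebesgue_int; apply/funext => v; rewrite EFinD.
Qed.

Lemma lebesgue_intZl (k : R) : 0 <= k ->
  lebesgue_int (fun v => (k * F1 v)%:E) = (k%:E * lebesgue_int (fun v => (F1 v)%:E))%E.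
Proof.
move=> k0; rewrite (lebesgue_int_idE (fun v => (k * F1 v)%:E)).
by rewrite (lebesgue_int_idE (fun v => (F1 v)%:E)) lebesgue_int_affineZl.
Qed.

Lemma le_lebesgue_int : (forall y, F1 y <= F2 y) ->
  (lebesgue_int (fun v => (F1 v)%:E) <= lebesgue_int (fun v => (F2 v)%:E))%E.
Proof.
rewrite (lebesgue_int_idE (fun v => (F1 v)%:E)) (lebesgue_int_idE (fun v => (F2 v)%:E)).
exact: le_lebesgue_int_affine.
Qed.

End AffineIntegrals.

End IteratedIntegral.

Section GibbsDensity.
Context {R : realType} {m : nat}.
Implicit Types (V W : 'rV[R]_m -> R).

Lemma continuous_expRN {V} : continuous V -> continuous (fun x => expR (- V x)).
Proof.
move=> cV x; apply: (@continuous_comp _ _ _ (fun x => - V x) expR).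
  exact: cvgN (cV x).
exact: continuous_expR.
Qed.

Lemma continuous_gibbs V : continuous V -> continuous (gibbs V).
Proof. by move=> cV x; exact: (cvgM (continuous_expRN cV x) (cvg_cst _)). Qed.

Lemma le_Zconst V W : continuous V -> continuous W ->
  (forall x, W x <= V x) -> (Zconst V <= Zconst W)%E.
Proof.
move=> cV cW WV; apply: le_lebesgue_int; try exact: continuous_expRN.
- by move=> x; exact: expR_ge0.
- by move=> x; exact: expR_ge0.
- by move=> x /=; rewrite ler_expR lerN2.
Qed.

Lemma Zconst_subr V c : continuous V ->
  Zconst (fun x => V x - c) = ((expR c)%:E * Zconst V)%E.
Proof.
move=> cV; rewrite /Zconst -lebesgue_intZl ?expR_ge0 //; last exact: continuous_expRN.
by congr lebesgue_int; apply/funext => x; rewrite opprB expRD.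
Qed.

Lemma lebesgue_int_gibbs V : continuous V -> (0 < Zconst V < +oo)%E ->
  lebesgue_int (fun x => (gibbs V x)%:E) = 1%:E.
Proof.
move=> cV /andP[Z0 Zoo].
have ZE : Zconst V = (fine (Zconst V))%:E by rewrite fineK // ge0_fin_numE ?ltW.
set Z := fine (Zconst V) in ZE *.
have Z_gt0 : 0 < Z by rewrite -lte_fin -ZE.
rewrite (_ : (fun x => _) = fun x => (Z^-1 * expR (- V x))%:E); last first.
  by apply/funext => x; rewrite /gibbs mulrC.
rewrite lebesgue_intZl ?invr_ge0 ?ltW //; last exact: continuous_expRN.
by rewrite -/(Zconst V) ZE -EFinM mulVf ?gt_eqF.
Qed.

Lemma tv_dist_le_of_minorant {p q : 'rV[R]_m -> R} {k : R} :
  continuous p -> continuous q -> (forall x, 0 <= q x) -> 0 <= k -> k <= 1 ->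
  (forall x, k * q x <= p x) ->
  lebesgue_int (fun x => (p x)%:E) = 1%:E -> lebesgue_int (fun x => (q x)%:E) = 1%:E ->
  (tv_dist p q <= (2 * (1 - k))%:E)%E.
Proof.
move=> cp cq q0 k0 k1 kqp Ip Iq.
have p0 x : 0 <= p x by apply: le_trans (kqp x); rewrite mulr_ge0.
have kq0 x : 0 <= 2 * k * q x by rewrite !mulr_ge0.
(* [min (p x) (q x) >= k * q x], and [|p - q| = p + q - 2 min(p, q)] *)
have dist_le x : `|p x - q x| + 2 * k * q x <= p x + q x.
  have kqq : k * q x <= q x by rewrite ler_piMl.
  have := kqp x; rewrite -lerBrDr ler_norml => kqp'; apply/andP; split; lra.
have cpq : continuous (fun x => `|p x - q x|).
  move=> x; apply: (@continuous_comp _ _ _ (fun x => p x - q x) Num.Def.normr).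
    exact: cvgB (cp x) (cq x).
  exact: norm_continuous.
have ckq : continuous (fun x => 2 * k * q x) by move=> x; exact: cvgM (cvg_cst _) (cq x).
have c_lhs : continuous (fun x => `|p x - q x| + 2 * k * q x).
  by move=> x; exact: cvgD (cpq x) (ckq x).
have c_rhs : continuous (fun x => p x + q x) by move=> x; exact: cvgD (cp x) (cq x).
have := @le_lebesgue_int R m _ _ c_lhs c_rhs (fun x => addr_ge0 (normr_ge0 _) (kq0 x))
  (fun x => addr_ge0 (p0 x) (q0 x)) dist_le.
rewrite !lebesgue_intD // lebesgue_intZl ?mulr_ge0 // Ip Iq.
have : (0 <= tv_dist p q)%E by apply: lebesgue_int_ge0 => x; rewrite lee_fin.
rewrite /tv_dist; case: (lebesgue_int _) => [t| |] //= _.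
by rewrite mule1 -!EFinD !lee_fin => ?; lra.
Qed.

Lemma tv_dist_gibbs_le V W (c : R) : continuous V -> continuous W ->
  (forall x, W x - c <= V x) -> (forall x, V x <= W x) -> (0 < Zconst W < +oo)%E ->
  (tv_dist (gibbs V) (gibbs W) <= (2 * c)%:E)%E.
Proof.
move=> cV cW WcV VW ZW; have c0 : 0 <= c by have := WcV 0; have := VW 0; lra.
have cWc : continuous (fun x => W x - c) by move=> x; exact: cvgB (cW x) (cvg_cst c).
have ZWE : Zconst W = (fine (Zconst W))%:E.
  by case/andP: ZW => ? ?; rewrite fineK // ge0_fin_numE ?ltW.
set B := fine (Zconst W) in ZWE; have B_gt0 : 0 < B by rewrite -lte_fin -ZWE; case/andP: ZW.
have ZWV : (B%:E <= Zconst V)%E by rewrite -ZWE; exact: le_Zconst.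
have ZVW : (Zconst V <= (expR c * B)%:E)%E.
  by rewrite EFinM -ZWE -Zconst_subr //; exact: le_Zconst.
have ZVE : Zconst V = (fine (Zconst V))%:E.
  by rewrite fineK // fin_numElt (lt_le_trans _ ZWV) ?ltNyr // (le_lt_trans ZVW) ?ltry.
set A := fine (Zconst V) in ZVE; rewrite ZVE !lee_fin in ZWV ZVW.
have ZV : (0 < Zconst V < +oo)%E by rewrite ZVE lte_fin ltry (lt_le_trans B_gt0).
have minorant x : expR (- c) * gibbs W x <= gibbs V x.
  rewrite /gibbs -/A -/B mulrCA; apply: ler_pM; rewrite ?expR_ge0 ?mulr_ge0 ?invr_ge0 //.
  - exact/ltW/(lt_le_trans B_gt0).
  - by rewrite ler_expR lerN2.
  - rewrite expRN -invfM lef_pV2 ?posrE ?mulr_gt0 ?expR_gt0 //.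
    exact: lt_le_trans B_gt0 ZWV.
apply: le_trans (tv_dist_le_of_minorant _ _ _ _ _ minorant _ _) _.
- exact: continuous_gibbs.
- exact: continuous_gibbs.
- by move=> x; rewrite divr_ge0 ?expR_ge0 // ltW.
- exact: expR_ge0.
- by rewrite expR_le1 oppr_le0.
- exact: lebesgue_int_gibbs.
- exact: lebesgue_int_gibbs.
- by rewrite lee_fin ler_pM2l // lerBlDr -lerBlDl; have := expR_ge1Dx (- c); lra.
Qed.

End GibbsDensity.

Section MoreauEnvelope.
Context {R : realType} {m : nat} {g : 'rV[R]_m -> R} {L lam : R}.
Implicit Types x y u v w : 'rV[R]_m.
Hypotheses (lam_gt0 : 0 < lam) (g_bb : bounded_below g).
Hypothesis g_lip : forall x y, `|g x - g y| <= L * enorm (x - y).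

Let moreau_set x := [set r | exists y, r = g y + enorm (x - y) ^+ 2 / (2 * lam)].

Let moreau_set_lb x : has_lbound (moreau_set x).
Proof.
case: g_bb => b gb; exists b => _ [y ->].
have : 0 <= enorm (x - y) ^+ 2 / (2 * lam) by rewrite divr_ge0 ?sqr_ge0 ?mulr_ge0 ?ltW.
by have := gb y; lra.
Qed.

Let moreau_set_n0 x : moreau_set x !=set0.
Proof. by exists (g x + enorm (x - x) ^+ 2 / (2 * lam)), x. Qed.

Lemma moreau_le x : moreau g lam x <= g x.
Proof.
apply: ge_inf; first exact: moreau_set_lb.
by exists x; rewrite subrr enorm0 expr0n /= mul0r addr0.
Qed.

(* Completing the square: [L E <= E^2 / (2 lam) + lam L^2 / 2]. *)
Lemma moreau_ge x : g x - lam * L ^+ 2 / 2 <= moreau g lam x.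
Proof.
rewrite /moreau; apply: lb_le_inf (moreau_set_n0 x) _ => _ [y ->].
set E := enorm (x - y).
have gxy : g x - g y <= L * E by apply: le_trans (ler_norm _) (g_lip x y).
have sq0 : 0 <= (E - lam * L) ^+ 2 / (2 * lam) by rewrite divr_ge0 ?sqr_ge0 ?mulr_ge0 ?ltW.
have sqE : (E - lam * L) ^+ 2 / (2 * lam) = E ^+ 2 / (2 * lam) - L * E + lam * L ^+ 2 / 2.
  by field; rewrite gt_eqF.
lra.
Qed.

Lemma moreau_lipschitz x y : `|moreau g lam x - moreau g lam y| <= L * enorm (x - y).
Proof.
suff moreau_leD u v : moreau g lam u <= moreau g lam v + L * enorm (u - v).
  by rewrite ler_norml; have := moreau_leD x y; have := moreau_leD y x; rewrite enormB; lra.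
rewrite -lerBlDr /moreau; apply: lb_le_inf (moreau_set_n0 v) _ => _ [w ->].
have uz : u - (w + (u - v)) = v - w by apply/matrixP => i j; rewrite !mxE; ring.
have zw : w + (u - v) - w = u - v by apply/matrixP => i j; rewrite !mxE; ring.
have := ge_inf (moreau_set_lb u) (ex_intro _ (w + (u - v)) erefl).
have := ler_norm (g (w + (u - v)) - g w); have := g_lip (w + (u - v)) w.
by rewrite uz zw /moreau; lra.
Qed.

End MoreauEnvelope.

Theorem proposition1 (R : realType) (d : nat)
  (f g : 'rV[R]_d -> R) (Lf : R)
  (* (H1) for f *)
  (hf_bb : bounded_below f)
  (hf_cvx : convex_fun f)
  (hf_diff : forall x, differentiable f x)
  (hf_gradc : continuous (grad f))
  (hf_gradL : forall x y, enorm (grad f x - grad f y) <= Lf * enorm (x - y))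
  (* (H1) for g : real-valued (g is Lipschitz), hence proper and lsc *)
  (hg_bb : bounded_below g)
  (hg_cvx : convex_fun g)
  (hg_lip : lipschitz_eucl g)
  (* 0 < int exp(-U) < +oo *)
  (hZ : (0 < Zconst (fun x => (f x + g x)%R) < +oo)%E) :
  forall lam : R, 0 < lam ->
    (tv_dist (gibbs (fun x => (f x + moreau g lam x)%R)) (gibbs (fun x => (f x + g x)%R))
      <= (lam * lip_norm g ^+ 2)%:E)%E.
Proof.
move=> lam lam_gt0; have g_lip := ler_lip_norm hg_lip; set L := lip_norm g in g_lip *.
have cf : continuous f by move=> x; exact: differentiable_continuous.
have cg : continuous g := lipschitz_continuous g_lip.
have cgl : continuous (moreau g lam).
  exact: lipschitz_continuous (moreau_lipschitz lam_gt0 hg_bb g_lip).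
have -> : lam * L ^+ 2 = 2 * (lam * L ^+ 2 / 2) by field.
apply: tv_dist_gibbs_le hZ.
- by move=> x; exact: cvgD (cf x) (cgl x).
- by move=> x; exact: cvgD (cf x) (cg x).
- by move=> x; rewrite -addrA lerD2l; exact: moreau_ge.
- by move=> x; rewrite lerD2l; exact: moreau_le.
Qed.
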